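(* Let $G$ be a compactly generated, totally disconnected, locally compact group with modular function $\Delta$, and let $\Gamma$ be a Cayley–Abels graph for $G$. Let $\alpha$ be a vertex of $\Gamma$, let $B_1,\dots,B_n$ be the orbits of $G_\alpha$ on the set $\Gamma(\alpha)$ of neighbours of $\alpha$, and for each $i$ choose $g_i\in G$ with $\alpha g_i\in B_i$. Then $$\mathrm{im}(\Delta)=\left\langle \frac{|(\alpha g_1)G_\alpha|}{|(\alpha g_1^{-1})G_\alpha|},\dots,\frac{|(\alpha g_n)G_\alpha|}{|(\alpha g_n^{-1})G_\alpha|}\right\rangle\le \mathbb{Q}^{+}.$$ In particular, $\mathrm{im}(\Delta)$ is a finitely generated free abelian subgroup of the multiplicative group of positive rationals.
   Context: Groups act on the right. A Cayley–Abels graph for a totally disconnected, locally compact group $G$ is a connected, locally finite simple graph with an action of $G$ by automorphisms that is vertex-transitive with compact open vertex stabilizers. The modular function $\Delta\colon G\to\mathbb{R}^{+}$ is defined via a right-invariant Haar measure $\mu$ by $\mu(gA)=\Delta(g)\mu(A)$; equivalently, for any compact open subgroup $U$, $\Delta(g)=|U:U\cap g^{-1}Ug|/|g^{-1}Ug:U\cap g^{-1}Ug|$. *)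

From HB Require Import structures.
From mathcomp Require Import all_boot all_order all_algebra.
From mathcomp Require Import all_classical all_reals all_analysis.
From Stdlib Require Import Relation_Operators.

Set Implicit Arguments.
Unset Strict Implicit.
Unset Printing Implicit Defensive.

Import Order.TTheory GRing.Theory Num.Theory.
Local Open Scope classical_set_scope.
Local Open Scope card_scope.

Record topgroup (G : topologicalType) := TopGroup {
  gmul : G -> G -> G;
  ginv : G -> G;
  gone : G;
  gmulA : forall x y z, gmul x (gmul y z) = gmul (gmul x y) z;
  gmul1g : forall x, gmul gone x = x;
  gmulg1 : forall x, gmul x gone = x;
  gmulVg : forall x, gmul (ginv x) x = gone;
  gmulgV : forall x, gmul x (ginv x) = gone;
  gmul_cont : continuous (fun p : G * G => gmul p.1 p.2);
  ginv_cont : continuous ginv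
}.

Definition tdlc (G : topologicalType) : Prop :=
  totally_disconnected [set: G] /\ locally_compact [set: G].

Section GroupNotions.
Context {G : topologicalType} (T : topgroup G).

Local Notation "x * y" := (gmul T x y).
Local Notation "x ^-1" := (ginv T x).

Definition is_subgroup (S : set G) : Prop :=
  S (gone T) /\ (forall x y, S x -> S y -> S (x * y)) /\
  (forall x, S x -> S (x ^-1)).

Definition generated (K : set G) : set G :=
  fun g => forall S : set G, is_subgroup S -> K `<=` S -> S g.

Definition compactly_generated : Prop :=
  exists K : set G, compact K /\ generated K = [set: G].

Definition conj_set (U : set G) (g : G) : set G :=
  [set g^-1 * u * g | u in U].

Definition rcoset (H : set G) (g : G) : set G := [set h * g | h in H].

Definition index_is (K H : set G) (n : nat) : Prop :=
  [set rcoset H k | k in K] #= `I_n.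

(* Delta(g) = |U : U cap g^-1Ug| / |g^-1Ug : U cap g^-1Ug|, computed with
   the compact open subgroup U. *)
Definition modular_value (U : set G) (g : G) (r : rat) : Prop :=
  exists m n : nat,
    index_is U (U `&` conj_set U g) m /\
    index_is (conj_set U g) (U `&` conj_set U g) n /\
    r = (m%:R / n%:R)%R.

Definition compact_open_subgroup (U : set G) : Prop :=
  is_subgroup U /\ compact U /\ open U.

End GroupNotions.

Definition simple_graph {V : Type} (E : V -> V -> Prop) : Prop :=
  (forall u v, E u v -> E v u) /\ (forall u, ~ E u u).

Definition connected_graph {V : Type} (E : V -> V -> Prop) : Prop :=
  forall u v, clos_refl_trans V E u v.

Definition locally_finite {V : Type} (E : V -> V -> Prop) : Prop :=
  forall v, finite_set [set w | E v w].

Section Action.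
Context {G : topologicalType} (T : topgroup G) {V : Type}.

Definition right_action (act : V -> G -> V) : Prop :=
  (forall v, act v (gone T) = v) /\
  (forall v g h, act v (gmul T g h) = act (act v g) h).

Definition stabilizer (act : V -> G -> V) (a : V) : set G :=
  [set g | act a g = a].

Definition orbit_under (act : V -> G -> V) (S : set G) (b : V) : set V :=
  [set act b g | g in S].

Definition cayley_abels (E : V -> V -> Prop) (act : V -> G -> V) : Prop :=
  simple_graph E /\ connected_graph E /\ locally_finite E /\
  right_action act /\
  (forall u v g, E u v <-> E (act u g) (act v g)) /\
  (forall u v, exists g, act u g = v) /\
  (forall a, compact (stabilizer act a) /\ open (stabilizer act a)).

End Action.

Definition rat_generated (n : nat) (q : 'I_n -> rat) : set rat :=
  [set r | exists e : 'I_n -> int, r = (\prod_(i < n) (q i ^ e i))%R].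

From HB Require Import structures.
From mathcomp Require Import all_boot all_order all_algebra.
From mathcomp Require Import all_classical all_reals all_analysis.
From mathcomp Require Import zify.
From Stdlib Require Import Relation_Operators Operators_Properties.
Import Order.TTheory GRing.Theory Num.Theory.

(* Fix a compact open subgroup U.  For compact open subgroups A, B the ratio
   |A : A cap B| / |B : A cap B| is well defined, and computing it through a
   common subgroup D <= A cap B shows that it is a multiplicative cocycle in
   (A, B).  Consequently Delta(h), the ratio for (U, h^-1 U h), does not
   depend on U and is a homomorphism G -> Q^+ that is trivial on U.
   Take U = G_alpha.  Every neighbour of alpha lies in a double coset
   G_alpha g_i G_alpha, so along a path alpha = v_0, ..., v_m = alpha h the
   value Delta(h) is a product of the Delta(g_i); conversely each Delta(g_i)
   is a value, hence im(Delta) = <Delta(g_1), ..., Delta(g_n)>.  By the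
   orbit-stabiliser correspondence, Delta(g_i) = |alpha g_i G_alpha| /
   |alpha g_i^-1 G_alpha|.  Finally every finitely generated subgroup of Q^+
   has a multiplicatively independent basis, found by induction on the finite
   set of primes occurring in its elements, peeling off one p-adic valuation
   at a time. *)

Set Implicit Arguments.
Unset Strict Implicit.
Unset Printing Implicit Defensive.

Local Open Scope classical_set_scope.
Local Open Scope card_scope.

Section TopGroupAlgebra.
Variables (G : topologicalType) (T : topgroup G).
Local Notation "x *g y" := (gmul T x y) (at level 40, left associativity).
Local Notation inv := (ginv T).
Local Notation one := (gone T).
Local Notation sg := (is_subgroup T).

Lemma tmulA x y z : x *g (y *g z) = x *g y *g z. Proof. exact: gmulA. Qed.
Lemma tmul1g x : one *g x = x. Proof. exact: gmul1g. Qed.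
Lemma tmulg1 x : x *g one = x. Proof. exact: gmulg1. Qed.
Lemma tmulVg x : inv x *g x = one. Proof. exact: gmulVg. Qed.
Lemma tmulgV x : x *g inv x = one. Proof. exact: gmulgV. Qed.
Lemma tmulKg x y : inv x *g (x *g y) = y.
Proof. by rewrite tmulA tmulVg tmul1g. Qed.
Lemma tmulgK x y : x *g y *g inv y = x.
Proof. by rewrite -tmulA tmulgV tmulg1. Qed.
Lemma tmulgKV x y : x *g inv y *g y = x.
Proof. by rewrite -tmulA tmulVg tmulg1. Qed.
Lemma tinv_uniq x y : x *g y = one -> inv x = y.
Proof. by move=> h; rewrite -[inv x]tmulg1 -h tmulKg. Qed.
Lemma tinvK x : inv (inv x) = x.
Proof. by apply: tinv_uniq; rewrite tmulVg. Qed.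
Lemma tinvM x y : inv (x *g y) = inv y *g inv x.
Proof. by apply: tinv_uniq; rewrite -tmulA (tmulA y) tmulgV tmul1g tmulgV. Qed.
Lemma tinv1 : inv one = one.
Proof. by apply: tinv_uniq; rewrite tmul1g. Qed.

Lemma tmulr_cont c : continuous (fun x => x *g c).
Proof.
move=> x; apply: (@continuous2_cvg _ _ _ _ _ _ id (fun=> c) (gmul T) x c).
- by have := @gmul_cont _ T (x, c).
- exact: cvg_id.
- exact: cvg_cst.
Qed.

Lemma tmull_cont c : continuous (fun x => c *g x).
Proof.
move=> x; apply: (@continuous2_cvg _ _ _ _ _ _ (fun=> c) id (gmul T) c x).
- by have := @gmul_cont _ T (c, x).
- exact: cvg_cst.
- exact: cvg_id.
Qed.

Lemma tconj_cont a b : continuous (fun x => a *g x *g b).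
Proof.
move=> x; apply: (@continuous_comp _ _ _ (fun x => a *g x) (fun y => y *g b)).
  exact: tmull_cont.
exact: tmulr_cont.
Qed.

Lemma sg1 H : sg H -> H one. Proof. by case. Qed.
Lemma sgM H x y : sg H -> H x -> H y -> H (x *g y).
Proof. by case=> _ [h _]; apply: h. Qed.
Lemma sgV H x : sg H -> H x -> H (inv x).
Proof. by case=> _ [_ h]; apply: h. Qed.

Lemma sgI H K : sg H -> sg K -> sg (H `&` K).
Proof.
move=> sH sK; split; first by split; apply: sg1.
split=> [x y [hx kx] [hy ky]|x [hx kx]]; split.
- exact: sgM. - exact: sgM. - exact: sgV. - exact: sgV.
Qed.

Lemma sg_sym H x y : sg H -> H (x *g inv y) -> H (y *g inv x).
Proof. by move=> sH /(sgV sH); rewrite tinvM tinvK. Qed.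

Lemma rcoset_eqP H x y : sg H -> rcoset T H x = rcoset T H y <-> H (x *g inv y).
Proof.
move=> sH; split=> [E|h].
  have : rcoset T H y x by rewrite -E; exists one; [exact: sg1 | rewrite tmul1g].
  by case=> u Hu <-; rewrite tmulgK.
apply/seteqP; split=> z [u Hu <-].
  exists (u *g (x *g inv y)); first exact: sgM.
  by rewrite -tmulA tmulgKV.
exists (u *g (y *g inv x)); first by apply: sgM => //; apply: sg_sym.
by rewrite -tmulA tmulgKV.
Qed.

Definition transversal (K H : set G) (I : finType) (f : I -> G) :=
  [/\ forall i, K (f i), forall i j, H (f i *g inv (f j)) -> i = j &
      forall k, K k -> exists i, H (k *g inv (f i))].

Lemma card_finType (I : finType) : [set: I] #= `I_#|I|.
Proof.
rewrite card_eq_sym; apply: card_eq_trans card_II _.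
have -> : [set: 'I_#|I|] = enum_rank @` [set: I].
  apply/seteqP; split=> // j _; exists (enum_val j) => //; exact: enum_valK.
apply: inj_card_eq => x y _ _; exact: enum_rank_inj.
Qed.

Lemma transversal_index K H (I : finType) (f : I -> G) :
  sg H -> transversal K H f -> index_is T K H #|I|.
Proof.
move=> sH [fK finj fcov].
have E : [set rcoset T H k | k in K] = (fun i => rcoset T H (f i)) @` [set: I].
  apply/seteqP; split=> X.
    case=> k Kk <-; have [i hi] := fcov k Kk; exists i => //.
    by apply/esym/rcoset_eqP.
  by case=> i _ <-; exists (f i).
rewrite /index_is E; apply: card_eq_trans (card_finType I).
by apply: inj_card_eq => i j _ _ /(rcoset_eqP _ _ sH) /finj.
Qed.

Lemma index_transversal K H n :
  sg H -> index_is T K H n -> exists f : 'I_n -> G, transversal K H f.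
Proof.
move=> sH; rewrite /index_is card_eq_sym => /card_set_bijP [F [Ffun Finj Fsurj]].
have : forall i : 'I_n, exists k, K k /\ rcoset T H k = F i.
  move=> i; have := Ffun (val i) (ltn_ord i); case=> k Kk <-; by exists k.
case/choice=> r hr; exists r; split.
- by move=> i; case: (hr i).
- move=> i j /(rcoset_eqP _ _ sH) e; apply: val_inj; apply: Finj.
  + by apply/mem_set; exact: ltn_ord.
  + by apply/mem_set; exact: ltn_ord.
  by case: (hr i) => _ <-; case: (hr j) => _ <-.
- move=> k Kk; have : [set rcoset T H k | k in K] (rcoset T H k) by exists k.
  case/Fsurj=> m mn Fm; exists (Ordinal mn); apply/(rcoset_eqP _ _ sH).
  by case: (hr (Ordinal mn)) => _ ->.
Qed.

Lemma index_unique K H m n : index_is T K H m -> index_is T K H n -> m = n.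
Proof.
move=> a b; apply/card_eq_II; apply: card_eq_trans b.
by rewrite card_eq_sym.
Qed.

Lemma index_gt0 K H n x : sg H -> K x -> index_is T K H n -> (0 < n)%N.
Proof.
move=> sH Kx /(index_transversal sH) [f [_ _ fc]]; have [i _] := fc x Kx.
by case: i => i /=; case: n {f fc} => // _; rewrite ltn0.
Qed.

Lemma index_self A : sg A -> index_is T A A 1.
Proof.
move=> sA.
have r : transversal A A (fun _ : 'I_1 => one).
  split=> //; first by move=> _; exact: sg1.
  - by move=> i j _; apply: val_inj; case: i => [[]] //; case: j => [[]].
  - by move=> k Ak; exists ord0; rewrite tinv1 tmulg1.
by have := transversal_index sA r; rewrite card_ord.
Qed.

Lemma transversal_mul A B C (I J : finType) (f : I -> G) (h : J -> G) :
  sg A -> sg B -> sg C -> C `<=` B -> B `<=` A ->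
  transversal A B f -> transversal B C h ->
  transversal A C (fun p : J * I => h p.1 *g f p.2).
Proof.
move=> sA sB sC CB BA [fA finj fc] [hB hinj hc]; split.
- by move=> [j i] /=; apply: sgM => //; apply: BA.
- move=> [j i] [j' i'] /= hC.
  have Bfi : B (f i *g inv (f i')).
    have := CB _ hC; rewrite tinvM => e.
    have e2 := sgM sB (sgM sB (sgV sB (hB j)) e) (hB j').
    by move: e2; rewrite !tmulA tmulVg tmul1g tmulgKV.
  have ii := finj _ _ Bfi; subst i'.
  by move: hC; rewrite tinvM tmulA tmulgK => /hinj ->.
- move=> k Ak; have [i Bi] := fc k Ak; have [j Cj] := hc _ Bi.
  by exists (j, i) => /=; rewrite tinvM tmulA.
Qed.

Lemma index_tower A B C m n : sg A -> sg B -> sg C -> C `<=` B -> B `<=` A ->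
  index_is T A B m -> index_is T B C n -> index_is T A C (n * m).
Proof.
move=> sA sB sC CB BA /(index_transversal sB) [f rf] /(index_transversal sC) [h rh].
have := transversal_index sC (transversal_mul sA sB sC CB BA rf rh).
by rewrite card_prod !card_ord.
Qed.

Lemma index_subset K K' H n : K' `<=` K -> index_is T K H n ->
  exists m, index_is T K' H m.
Proof.
move=> KK' hn; have : finite_set [set rcoset T H k | k in K] by exists n.
apply: sub_finite_set => X [k Kk <-]; exists k => //; exact: KK'.
Qed.

(* A compact subgroup has finite index over its intersection with an open
   subgroup: the translates of V cover U. *)
Lemma index_compact_open U V : sg U -> sg V -> compact U -> open V ->
  exists n, index_is T U (U `&` V) n.
Proof.
move=> sU sV cU oV.
pose Gp : ptopologicalType := HB.pack G (isPointed.Build G one).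
have cc : cover_compact U.
  have h := @compact_cover Gp; exact: (eq_ind _ (fun P => P U) cU _ h).
have [D' D'U cov] :
    finite_subset_cover U (fun u => (fun x => x *g inv u) @^-1` V) U.
  apply: (cc G).
  - by move=> u _; apply: (proj1 (continuousP _) (@tmulr_cont (inv u))).
  - move=> k Uk; exists k => //=; rewrite tmulgV; exact: sg1.
have : finite_set [set rcoset T (U `&` V) k | k in U].
  apply: (sub_finite_set _ (finite_image (fun u => rcoset T (U `&` V) u)
     (finite_fset D'))).
  move=> X [k Uk <-]; have [u D'u Vku] := cov k Uk.
  have Uu : U u by have := D'U u D'u; rewrite inE.
  exists u => //; apply/(rcoset_eqP _ _ (sgI sU sV)); apply: (sg_sym (sgI sU sV)).
  by split => //; apply: sgM => //; exact: sgV.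
by [].
Qed.

Lemma conj_setP U g x : conj_set T U g x <-> U (g *g x *g inv g).
Proof.
split=> [[u Uu <-]|h]; first by rewrite !tmulA [g *g inv g]tmulgV tmul1g tmulgK.
by exists (g *g x *g inv g) => //; rewrite !tmulA [inv g *g g]tmulVg tmul1g tmulgKV.
Qed.

Lemma conj_setE U g : conj_set T U g = (fun x => g *g x *g inv g) @^-1` U.
Proof. by apply/seteqP; split=> x /conj_setP. Qed.

Lemma conj_setM U g h : conj_set T (conj_set T U g) h = conj_set T U (g *g h).
Proof.
apply/seteqP; split=> x.
  move/conj_setP/conj_setP => e; apply/conj_setP.
  by move: e; rewrite tinvM !tmulA.
move/conj_setP => e; apply/conj_setP; apply/conj_setP.
by move: e; rewrite tinvM !tmulA.
Qed.

Lemma conj_set1 U : conj_set T U one = U.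
Proof.
apply/seteqP; split=> x.
  by move/conj_setP; rewrite tmul1g tinv1 tmulg1.
by move=> h; apply/conj_setP; rewrite tmul1g tinv1 tmulg1.
Qed.

Lemma conj_setI U V g : conj_set T (U `&` V) g = conj_set T U g `&` conj_set T V g.
Proof.
apply/seteqP; split=> x.
  by move/conj_setP => [a b]; split; apply/conj_setP.
by move=> [/conj_setP a /conj_setP b]; apply/conj_setP.
Qed.

Lemma conj_set_id U s : sg U -> U s -> conj_set T U s = U.
Proof.
move=> sU Us; apply/seteqP; split=> x.
  move/conj_setP => h; have := sgM sU (sgM sU (sgV sU Us) h) Us.
  by rewrite !tmulA [inv s *g s]tmulVg tmul1g tmulgKV.
move=> h; apply/conj_setP; apply: sgM => //; first apply: sgM => //.
exact: sgV.
Qed.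

Lemma conjM a x y : inv a *g (x *g y) *g a = (inv a *g x *g a) *g (inv a *g y *g a).
Proof. by rewrite !tmulA tmulgK. Qed.
Lemma conjV a x : inv (inv a *g x *g a) = inv a *g inv x *g a.
Proof. by rewrite !tinvM tinvK !tmulA. Qed.
Lemma conjK a x : a *g (inv a *g x *g a) *g inv a = x.
Proof. by rewrite !tmulA [a *g inv a]tmulgV tmul1g tmulgK. Qed.
Lemma conjM' a x y : a *g (x *g y) *g inv a = (a *g x *g inv a) *g (a *g y *g inv a).
Proof. by have := conjM (inv a) x y; rewrite tinvK. Qed.
Lemma conjV' a x : inv (a *g x *g inv a) = a *g inv x *g inv a.
Proof. by have := conjV (inv a) x; rewrite tinvK. Qed.

Lemma sg_conj U g : sg U -> sg (conj_set T U g).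
Proof.
move=> sU; split.
  by apply/conj_setP; rewrite tmulg1 tmulgV; apply: sg1.
split=> [x y /conj_setP hx /conj_setP hy|x /conj_setP hx]; apply/conj_setP.
  by rewrite conjM'; apply: sgM.
by rewrite -conjV'; apply: sgV.
Qed.

Lemma transversal_conj A B (I : finType) (f : I -> G) g : transversal A B f ->
  transversal (conj_set T A g) (conj_set T B g) (fun i => inv g *g f i *g g).
Proof.
move=> [fA finj fc]; split.
- by move=> i; apply/conj_setP; rewrite conjK.
- move=> i j /conj_setP; rewrite conjV -conjM conjK; exact: finj.
- move=> k /conj_setP /fc [i hi]; exists i; apply/conj_setP.
  by rewrite conjV conjM' conjK.
Qed.

Lemma index_conj A B n g : sg B -> index_is T A B n ->
  index_is T (conj_set T A g) (conj_set T B g) n.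
Proof.
move=> sB /(index_transversal sB) [f rf].
have := transversal_index (sg_conj g sB) (transversal_conj g rf).
by rewrite card_ord.
Qed.

Lemma compact_open_sg U : compact_open_subgroup T U -> sg U. Proof. by case. Qed.
Lemma compact_open_compact U : compact_open_subgroup T U -> compact U.
Proof. by case=> _ []. Qed.
Lemma compact_open_open U : compact_open_subgroup T U -> open U.
Proof. by case=> _ []. Qed.

Lemma compact_open_conj U g :
  compact_open_subgroup T U -> compact_open_subgroup T (conj_set T U g).
Proof.
move=> [sU [cU oU]]; split; first exact: sg_conj.
split.
  apply: continuous_compact => //; apply: continuous_subspaceT.
  exact: tconj_cont.
rewrite conj_setE; apply: (proj1 (continuousP _)) => //.
exact: tconj_cont.
Qed.

End TopGroupAlgebra.

Section IndexRatio.
Variables (G : topologicalType) (T : topgroup G).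
Local Notation "x *g y" := (gmul T x y) (at level 40, left associativity).
Local Notation sg := (is_subgroup T).
Local Notation cos := (compact_open_subgroup T).

(* r = |A : A cap B| / |B : A cap B|; modular_value T U g is the special
   case B = g^-1 U g. *)
Definition index_ratio (A B : set G) (r : rat) := exists m n : nat,
  index_is T A (A `&` B) m /\ index_is T B (A `&` B) n /\ r = (m%:R / n%:R)%R.

Lemma index_ratio_exists A B : cos A -> cos B -> exists r, index_ratio A B r.
Proof.
move=> cA cB.
have [m hm] := index_compact_open (compact_open_sg cA) (compact_open_sg cB)
  (compact_open_compact cA) (compact_open_open cB).
have [n hn] := index_compact_open (compact_open_sg cB) (compact_open_sg cA)
  (compact_open_compact cB) (compact_open_open cA).
by exists (m%:R / n%:R)%R, m, n; rewrite setIC in hn.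
Qed.

Lemma index_ratio_through A B D p q r : sg A -> sg B -> sg D ->
  D `<=` A `&` B -> index_is T A D p -> index_is T B D q ->
  index_ratio A B r -> r = (p%:R / q%:R)%R.
Proof.
move=> sA sB sD DAB hp hq [m [n [hm [hn ->]]]].
have [k hk] := index_subset (@subIsetl _ A B) hp.
have sAB := sgI sA sB.
have p_eq := index_unique hp (index_tower sA sAB sD DAB (@subIsetl _ A B) hm hk).
have q_eq := index_unique hq (index_tower sB sAB sD DAB (@subIsetr _ A B) hn hk).
have k0 := index_gt0 sD (sg1 sAB) hk.
have n0 := index_gt0 sAB (sg1 sB) hn.
rewrite p_eq q_eq !natrM.
have kR : (k%:R : rat) != 0%R by rewrite pnatr_eq0 -lt0n.
have nR : (n%:R : rat) != 0%R by rewrite pnatr_eq0 -lt0n.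
by rewrite -mulf_div divff // mul1r.
Qed.

Lemma index_ratio_cocycle A B C r1 r2 r3 : cos A -> cos B -> cos C ->
  index_ratio A B r1 -> index_ratio B C r2 -> index_ratio A C r3 ->
  r3 = (r1 * r2)%R.
Proof.
move=> cA cB cC h1 h2 h3.
have sA := compact_open_sg cA; have sB := compact_open_sg cB.
have sC := compact_open_sg cC.
pose D := A `&` (B `&` C).
have sD : sg D by apply: sgI => //; apply: sgI.
have [p hp] := index_compact_open sA (sgI sB sC) (compact_open_compact cA)
  (openI (compact_open_open cB) (compact_open_open cC)).
have [q hq] := index_compact_open sB (sgI sA sC) (compact_open_compact cB)
  (openI (compact_open_open cA) (compact_open_open cC)).
have [s hs] := index_compact_open sC (sgI sA sB) (compact_open_compact cC)
  (openI (compact_open_open cA) (compact_open_open cB)).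
rewrite (_ : B `&` (A `&` C) = D) in hq; last by rewrite /D setICA.
rewrite (_ : C `&` (A `&` B) = D) in hs; last by rewrite /D setIC -setIA.
have DAB : D `<=` A `&` B by move=> x [? [? ?]].
have DBC : D `<=` B `&` C by move=> x [? [? ?]].
have DAC : D `<=` A `&` C by move=> x [? [? ?]].
rewrite (index_ratio_through sA sB sD DAB hp hq h1).
rewrite (index_ratio_through sB sC sD DBC hq hs h2).
rewrite (index_ratio_through sA sC sD DAC hp hs h3).
have q0 := index_gt0 sD (sg1 sB) hq.
have qR : (q%:R : rat) != 0%R by rewrite pnatr_eq0 -lt0n.
by rewrite mulf_div [(q%:R * s%:R)%R]mulrC -mulf_div divff // mulr1.
Qed.

Lemma index_ratio_conj A B g r : sg A -> sg B -> index_ratio A B r ->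
  index_ratio (conj_set T A g) (conj_set T B g) r.
Proof.
move=> sA sB [m [n [hm [hn ->]]]]; exists m, n; rewrite -conj_setI.
split; first exact: index_conj (sgI sA sB) hm.
by split=> //; exact: index_conj (sgI sA sB) hn.
Qed.

Lemma index_ratio_self A : sg A -> index_ratio A A 1%R.
Proof.
move=> sA; exists 1%N, 1%N; rewrite setIid; split; first exact: index_self.
by split; [exact: index_self | rewrite divr1].
Qed.

Lemma modular_value_indep U W g r s : cos U -> cos W ->
  modular_value T U g r -> modular_value T W g s -> r = s.
Proof.
move=> cU cW hr hs.
have cUg := compact_open_conj g cU; have cWg := compact_open_conj g cW.
have [a ha] := index_ratio_exists cW cU; have [b hb] := index_ratio_exists cU cW.
have [c hc] := index_ratio_exists cW cUg.
have hd := index_ratio_conj g (compact_open_sg cU) (compact_open_sg cW) hb.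
have e1 := index_ratio_cocycle cW cU cUg ha hr hc.
have e2 := index_ratio_cocycle cW cUg cWg hc hd hs.
have e3 := index_ratio_cocycle cW cU cW ha hb (index_ratio_self (compact_open_sg cW)).
by rewrite e2 e1 mulrAC -e3 mul1r.
Qed.

(* Multiplicativity, from the cocycle identity along U, h^-1 U h, (gh)^-1 U gh. *)
Lemma modular_value_mul U g h r1 r2 r3 : cos U ->
  modular_value T U g r1 -> modular_value T U h r2 ->
  modular_value T U (g *g h) r3 -> r3 = (r1 * r2)%R.
Proof.
move=> cU h1 h2 h3.
have := index_ratio_conj h (compact_open_sg cU)
  (compact_open_sg (compact_open_conj g cU)) h1.
rewrite conj_setM => h4.
rewrite mulrC; exact: index_ratio_cocycle cU (compact_open_conj h cU)
  (compact_open_conj (g *g h) cU) h2 h4 h3.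
Qed.

End IndexRatio.

Section ModularFunction.
Variables (G : topologicalType) (T : topgroup G) (U : set G).
Hypothesis cosU : compact_open_subgroup T U.
Local Notation "x *g y" := (gmul T x y) (at level 40, left associativity).
Local Notation inv := (ginv T).

Definition Delta (h : G) : rat := xget 0%R (modular_value T U h).

Lemma DeltaP h : modular_value T U h (Delta h).
Proof. by apply: xgetPex; exact: index_ratio_exists cosU (compact_open_conj h cosU). Qed.

Lemma Delta_unique W h r :
  compact_open_subgroup T W -> modular_value T W h r -> r = Delta h.
Proof. by move=> cW hr; exact: modular_value_indep cW cosU hr (DeltaP h). Qed.

Lemma DeltaM x y : Delta (x *g y) = (Delta x * Delta y)%R.
Proof. exact: modular_value_mul cosU (DeltaP x) (DeltaP y) (DeltaP (x *g y)). Qed.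

Lemma Delta_id s : U s -> Delta s = 1%R.
Proof.
move=> Us; have sU := compact_open_sg cosU; apply/esym/(Delta_unique cosU).
by rewrite /modular_value conj_set_id //; exact: index_ratio_self.
Qed.

Lemma Delta_gt0 h : (0 < Delta h)%R.
Proof.
have sU := compact_open_sg cosU.
have [m [n [hm [hn ->]]]] := DeltaP h.
have m0 := index_gt0 (sgI sU (sg_conj h sU)) (sg1 sU) hm.
have n0 := index_gt0 (sgI sU (sg_conj h sU)) (sg1 (sg_conj h sU)) hn.
by rewrite divr_gt0 // ltr0n.
Qed.

Lemma DeltaV x : Delta (inv x) = (Delta x)^-1%R.
Proof.
have := DeltaM x (inv x); rewrite tmulgV Delta_id; last exact: (sg1 (compact_open_sg cosU)).
have nz : Delta x != 0%R by rewrite gt_eqF ?Delta_gt0.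
by move=> h; rewrite -[LHS]mul1r -(mulVf nz) -mulrA -h mulr1.
Qed.

Lemma modular_values_range W : compact_open_subgroup T W ->
  [set r | exists h, modular_value T W h r] = range Delta.
Proof.
move=> cW; apply/seteqP; split=> r.
  by case=> h hr; exists h => //; rewrite (Delta_unique cW hr).
case=> h _ <-; have [r' hr'] := index_ratio_exists cW (compact_open_conj h cW).
by exists h; rewrite -(Delta_unique cW hr').
Qed.

End ModularFunction.

Section Orbits.
Variables (G : topologicalType) (T : topgroup G) (V : Type) (act : V -> G -> V).
Hypothesis ra : right_action T act.
Local Notation "x *g y" := (gmul T x y) (at level 40, left associativity).
Local Notation inv := (ginv T).
Local Notation one := (gone T).
Local Notation sg := (is_subgroup T).
Local Notation stab := (stabilizer act).

Lemma act1 v : act v one = v. Proof. by case: ra. Qed.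
Lemma actM v g h : act v (g *g h) = act (act v g) h. Proof. by case: ra. Qed.
Lemma actK v g : act (act v g) (inv g) = v.
Proof. by rewrite -actM tmulgV act1. Qed.
Lemma actKV v g : act (act v (inv g)) g = v.
Proof. by rewrite -actM tmulVg act1. Qed.

Lemma stab_sg a : sg (stab a).
Proof.
split; first exact: act1.
split=> [x y hx hy|x hx]; rewrite /stabilizer /=; first by rewrite actM hx hy.
by rewrite -{1}hx actK.
Qed.

Lemma act_eq_stab a x y : act a x = act a y -> stab a (x *g inv y).
Proof. by move=> e; rewrite /stabilizer /= actM e actK. Qed.

Lemma stab_conj a g : conj_set T (stab a) g = stab (act a g).
Proof.
apply/seteqP; split=> x.
  move/conj_setP; rewrite /stabilizer /= => e.
  by rewrite -{2}e !actM actKV.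
rewrite /stabilizer /= => e; apply/conj_setP; rewrite /stabilizer /=.
by rewrite !actM e actK.
Qed.

Lemma orbit_card W v n : sg W -> index_is T W (W `&` stab v) n ->
  orbit_under act W v #= `I_n.
Proof.
move=> sW /(index_transversal (sgI sW (stab_sg v))) [f [fW finj fc]].
have -> : orbit_under act W v = (fun i => act v (f i)) @` [set: 'I_n].
  apply/seteqP; split=> x.
    case=> w Ww <-; have [i [_ hi]] := fc w Ww; exists i => //.
    by rewrite -(tmulgKV T w (f i)) actM hi.
  by case=> i _ <-; exists (f i).
apply: card_eq_trans; first apply: inj_card_eq.
  move=> i j _ _ /act_eq_stab h; apply: finj; split => //.
  by apply: sgM => //; apply: sgV.
by have := card_finType 'I_n; rewrite card_ord.
Qed.

Lemma stab_orbit_card a g n :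
  index_is T (stab a) (stab a `&` conj_set T (stab a) g) n ->
  orbit_under act (stab a) (act a g) #= `I_n.
Proof. by move=> h; apply: orbit_card (stab_sg a) _; rewrite -stab_conj. Qed.

Lemma stab_orbit_card_inv a g n :
  index_is T (conj_set T (stab a) g) (stab a `&` conj_set T (stab a) g) n ->
  orbit_under act (stab a) (act a (inv g)) #= `I_n.
Proof.
move=> h; apply: orbit_card (stab_sg a) _.
have := index_conj (inv g) (sgI (stab_sg a) (sg_conj g (stab_sg a))) h.
by rewrite conj_setI !conj_setM tmulgV conj_set1 stab_conj setIC.
Qed.

End Orbits.

Local Open Scope ring_scope.

Section RatGenerated.
Variables (n : nat) (q : 'I_n -> rat).
Hypothesis q_neq0 : forall i, q i != 0.

Lemma rat_generated1 : rat_generated q 1.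
Proof. by exists (fun=> 0); rewrite big1 // => i _; rewrite expr0z. Qed.

Lemma rat_generatedM x y :
  rat_generated q x -> rat_generated q y -> rat_generated q (x * y).
Proof.
move=> [e ->] [f ->]; exists (fun i => e i + f i).
by rewrite -big_split /=; apply: eq_bigr => i _; rewrite expfzDr.
Qed.

Lemma rat_generatedV x : rat_generated q x -> rat_generated q x^-1.
Proof.
move=> [e ->]; exists (fun i => - e i).
by rewrite -prodfV; apply: eq_bigr => i _; rewrite invr_expz.
Qed.

Lemma rat_generated_gen i : rat_generated q (q i).
Proof.
exists (fun j => (j == i)%:Z); rewrite (bigD1 i) //= eqxx expr1z big1 ?mulr1 //.
by move=> j /negbTE ->; rewrite expr0z.
Qed.

Lemma rat_generated_min (S : set rat) : S 1 ->
  (forall x y, S x -> S y -> S (x * y)) -> (forall x, S x -> S x^-1) ->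
  (forall i, S (q i)) -> rat_generated q `<=` S.
Proof.
move=> S1 SM SV Sq x [e ->]; apply: (big_ind S) => // i _.
have Spow k : S (q i ^ k.+1).
  by elim: k => [|k IH]; [rewrite expr1z | rewrite exprSzr; apply: SM].
case: (e i) => [[|k]|k]; first by rewrite expr0z.
  exact: Spow.
by rewrite NegzE -invr_expz; apply/SV/Spow.
Qed.

End RatGenerated.

Definition numn (x : rat) : nat := `|numq x|%N.
Definition denn (x : rat) : nat := `|denq x|%N.
Definition padic (p : nat) (x : rat) : int :=
  (logn p (numn x))%:Z - (logn p (denn x))%:Z.

Lemma denn_gt0 x : (0 < denn x)%N.
Proof. by rewrite /denn absz_gt0 gt_eqF // denq_gt0. Qed.

Lemma numn_gt0 x : 0 < x -> (0 < numn x)%N.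
Proof. by move=> x0; rewrite /numn absz_gt0 gt_eqF // numq_gt0. Qed.

Lemma numn_denn x : 0 < x -> x = (numn x)%:R / (denn x)%:R.
Proof.
move=> x0.
have n0 : (0 : int) <= numq x by rewrite ltW // numq_gt0.
have d0 : (0 : int) <= denq x by exact/ltW/denq_gt0.
by rewrite /numn /denn !natr_absz !ger0_norm // divq_num_den.
Qed.

Lemma padic_frac p a b : (0 < a)%N -> (0 < b)%N ->
  padic p (a%:R / b%:R) = (logn p a)%:Z - (logn p b)%:Z.
Proof.
move=> a0 b0; set x := a%:R / b%:R.
have x0 : 0 < x by rewrite divr_gt0 // ltr0n.
have : (a * denn x = numn x * b)%N.
  apply/eqP; rewrite -(eqr_nat rat) !natrM.
  have := numn_denn x0; rewrite {1}/x => /eqP.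
  by rewrite eqr_div ?pnatr_eq0 -?lt0n ?denn_gt0.
move/(congr1 (logn p)); rewrite !lognM ?denn_gt0 ?numn_gt0 // => h.
rewrite /padic; lia.
Qed.

Lemma padicM p x y : 0 < x -> 0 < y -> padic p (x * y) = padic p x + padic p y.
Proof.
move=> x0 y0; rewrite {1}(numn_denn x0) {1}(numn_denn y0) mulf_div -!natrM.
rewrite padic_frac ?muln_gt0 ?numn_gt0 ?denn_gt0 // !lognM ?numn_gt0 ?denn_gt0 //.
rewrite /padic !PoszD; lia.
Qed.

Lemma padic1 p : padic p 1 = 0.
Proof. by have := padic_frac p (ltnSn 0) (ltnSn 0); rewrite divr1 subrr. Qed.

Lemma padicV p x : 0 < x -> padic p x^-1 = - padic p x.
Proof.
move=> x0; have := padicM p x0 (_ : 0 < x^-1); rewrite invr_gt0 => /(_ x0).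
rewrite mulfV ?gt_eqF // padic1 => h.
by apply/eqP; rewrite -subr_eq0 opprK addrC -h.
Qed.

Lemma padicX p x (e : int) : 0 < x -> padic p (x ^ e) = e * padic p x.
Proof.
move=> x0; have hn (k : nat) : padic p (x ^ k) = k%:Z * padic p x.
  elim: k => [|k IH]; first by rewrite expr0z padic1 mul0r.
  by rewrite exprSzr padicM ?exprz_gt0 // IH -{2}(add0n k) -addn1 PoszD mulrDl mul1r.
case: e => k; first exact: hn.
by rewrite NegzE -invr_expz padicV ?exprz_gt0 // hn mulNr.
Qed.

Lemma padic_prod p k (c : 'I_k -> rat) (e : 'I_k -> int) : (forall j, 0 < c j) ->
  padic p (\prod_j c j ^ e j) = \sum_j e j * padic p (c j).
Proof.
move=> c0.
suff : 0 < \prod_j c j ^ e j /\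
       padic p (\prod_j c j ^ e j) = \sum_j e j * padic p (c j) by case.
apply: (@big_ind2 rat int (fun a b => 0 < a /\ padic p a = b) 1 *%R 0 +%R).
- by split; [exact: ltr01 | exact: padic1].
- move=> a1 b1 a2 b2 [h1 <-] [h2 <-]; split; first exact: mulr_gt0.
  exact: padicM.
- by move=> j _; split; [exact: exprz_gt0 | exact: padicX].
Qed.

Lemma padic_eq1 x : 0 < x -> (forall p, prime p -> padic p x = 0) -> x = 1.
Proof.
move=> x0 h.
have e : numn x = denn x.
  apply: (@eqn_from_log (numn x) (denn x) (numn_gt0 x0) (denn_gt0 x)) => p.
  have [pp|pp] := boolP (prime p).
    by apply/eqP; rewrite -eqz_nat -subr_eq0; apply/eqP; exact: h.
  by rewrite (lognE p (numn x)) (lognE p (denn x)) (negbTE pp).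
have := coprime_num_den x; rewrite -/(numn x) -/(denn x) -e /coprime gcdnn.
by move=> /eqP e1; rewrite (numn_denn x0) -e e1 divr1.
Qed.

Lemma padic_large p x : 0 < x -> prime p ->
  (numn x < p)%N -> (denn x < p)%N -> padic p x = 0.
Proof.
move=> x0 pp hN hD.
have l0 m : (0 < m)%N -> (m < p)%N -> logn p m = 0%N.
  move=> m0 mp; rewrite lognE pp m0 /=.
  by case: ifP => // pd; have := dvdn_leq m0 pd; rewrite leqNgt mp.
by rewrite /padic (l0 _ (numn_gt0 x0) hN) (l0 _ (denn_gt0 x) hD) subrr.
Qed.

Definition pos_subgroup (H : set rat) := [/\ H 1,
  (forall x y, H x -> H y -> H (x * y)), (forall x, H x -> H x^-1) &
  (forall x, H x -> 0 < x)].

Definition padic_support (S : seq nat) (H : set rat) :=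
  forall x p, H x -> prime p -> p \notin S -> padic p x = 0.

Definition mul_independent k (c : 'I_k -> rat) :=
  forall e : 'I_k -> int, \prod_j c j ^ e j = 1 -> forall j, e j = 0.

Definition free_basis (H : set rat) k (c : 'I_k -> rat) :=
  [/\ (forall j, 0 < c j), (forall j, H (c j)), mul_independent c &
      (forall x, H x -> exists e : 'I_k -> int, x = \prod_j c j ^ e j)].

Lemma pos_subgroupX H x (e : int) : pos_subgroup H -> H x -> H (x ^ e).
Proof.
move=> [H1 HM HV _] Hx.
have hn (k : nat) : H (x ^ k).
  by elim: k => [|k IH]; [rewrite expr0z | rewrite exprSzr; apply: HM].
case: e => k; first exact: hn.
by rewrite NegzE -invr_expz; apply: HV.
Qed.

Definition padic_kernel (p : nat) (H : set rat) := [set x | H x /\ padic p x = 0].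

Lemma padic_kernel_subgroup p H :
  pos_subgroup H -> pos_subgroup (padic_kernel p H).
Proof.
move=> [H1 HM HV Hpos]; split.
- by split=> //; exact: padic1.
- move=> x y [hx vx] [hy vy]; split; first exact: HM.
  by rewrite padicM ?Hpos // vx vy addr0.
- move=> x [hx vx]; split; first exact: HV.
  by rewrite padicV ?Hpos // vx oppr0.
- by move=> x [hx _]; exact: Hpos.
Qed.

Lemma padic_kernel_support p S H :
  padic_support (p :: S) H -> padic_support S (padic_kernel p H).
Proof.
move=> hS x p' [hx vx] pp' nS.
have [->|ne] := eqVneq p' p; first exact: vx.
by apply: hS => //; rewrite in_cons negb_or ne.
Qed.

Lemma padic_least_generator p H : pos_subgroup H ->
  (exists x, H x /\ padic p x != 0) ->
  exists2 h0, H h0 /\ 0 < padic p h0 &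
    forall x, H x -> (padic p h0 %| padic p x)%Z.
Proof.
move=> gH [x0 [Hx0 nx0]]; have [H1 HM HV Hpos] := gH.
have [y [Hy vy]] : exists y, H y /\ 0 < padic p y.
  case: (ltrP 0 (padic p x0)) => h; first by exists x0.
  exists x0^-1; split; first exact: HV.
  by rewrite padicV ?Hpos // oppr_gt0 lt_neqAle nx0 h.
pose P := fun m : nat => `[< exists x, H x /\ padic p x = m.+1%:Z >].
have exP : exists m, P m.
  exists (`|padic p y|%N.-1); apply/asboolP; exists y; split=> //.
  by move: vy; set z := padic p y; lia.
case: (ex_minnP exP) => m /asboolP [h0 [Hh0 vh0]] hmin.
exists h0; first by rewrite vh0.
move=> x Hx; rewrite vh0; apply/dvdz_mod0P.
set z := padic p x; set d : int := m.+1%:Z; set t := (z %/ d)%Z.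
have dnz : d != 0 by [].
have h0t : 0 < h0 ^ (- t) by apply/exprz_gt0/Hpos.
have Hy' : H (x * h0 ^ (- t)) by apply: HM => //; apply: pos_subgroupX.
have vy' : padic p (x * h0 ^ (- t)) = (z %% d)%Z.
  rewrite (padicM p (Hpos _ Hx) h0t) (padicX _ _ (Hpos _ Hh0)) vh0 -/d -/z.
  by have := divz_eq z d; rewrite -/t; nia.
have ge := modz_ge0 z dnz; have lt := ltz_mod z dnz.
apply/eqP; apply: contraT => rne.
have : P (`|(z %% d)%Z|%N.-1).
  apply/asboolP; exists (x * h0 ^ (- t)); split => //; rewrite vy'.
  by move: ge rne; set r := (z %% d)%Z; lia.
by move/hmin; move: lt ge rne; rewrite /d; set r := (z %% d)%Z; lia.
Qed.

Definition cons_family k (h0 : rat) (c : 'I_k -> rat) : 'I_k.+1 -> rat :=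
  fun j => if unlift ord0 j is Some j' then c j' else h0.

Lemma prod_cons_family k h0 (c : 'I_k -> rat) (e : 'I_k.+1 -> int) :
  \prod_(j < k.+1) cons_family h0 c j ^ e j =
  h0 ^ e ord0 * \prod_(j < k) c j ^ e (lift ord0 j).
Proof.
rewrite big_ord_recl /cons_family unlift_none; congr (_ * _).
by apply: eq_bigr => j _; rewrite liftK.
Qed.

Lemma free_basis_extend p H k (c : 'I_k -> rat) h0 : pos_subgroup H ->
  free_basis (padic_kernel p H) c -> H h0 -> 0 < padic p h0 ->
  (forall x, H x -> (padic p h0 %| padic p x)%Z) ->
  free_basis H (cons_family h0 c).
Proof.
move=> gH [cpos cH cind crep] Hh0 vh0 hdiv; have [H1 HM HV Hpos] := gH.
have h0pos := Hpos _ Hh0.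
split.
- by move=> j; rewrite /cons_family; case: (unlift ord0 j).
- by move=> j; rewrite /cons_family; case: (unlift ord0 j) => [j'|] //; case: (cH j').
- move=> e; rewrite prod_cons_family => E.
  have Ppos : 0 < \prod_(j < k) c j ^ e (lift ord0 j).
    by apply: prodr_gt0 => j _; apply: exprz_gt0.
  have := congr1 (padic p) E.
  rewrite padic1 (padicM p (exprz_gt0 _ h0pos) Ppos) (padicX _ _ h0pos).
  rewrite padic_prod // big1 ?addr0; last by move=> j _; case: (cH j) => _ ->; rewrite mulr0.
  move/eqP; rewrite mulf_eq0 (gt_eqF vh0) orbF => /eqP e0.
  rewrite e0 expr0z mul1r in E; have ind := cind _ E.
  by move=> j; case: (unliftP ord0 j) => [j'|] ->.
- move=> x Hx; set t := (padic p x %/ padic p h0)%Z.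
  have h0t : 0 < h0 ^ (- t) by apply: exprz_gt0.
  have Ky : padic_kernel p H (x * h0 ^ (- t)).
    split; first by apply: HM => //; apply: pos_subgroupX.
    rewrite (padicM p (Hpos _ Hx) h0t) (padicX _ _ h0pos) mulNr divzK ?hdiv //.
    by rewrite subrr.
  have [e' ye'] := crep _ Ky.
  exists (fun j => if unlift ord0 j is Some j' then e' j' else t).
  rewrite prod_cons_family unlift_none.
  under eq_bigr do rewrite liftK.
  rewrite -ye' -invr_expz mulrCA mulfV ?mulr1 //.
  by rewrite expfz_neq0 // gt_eqF.
Qed.

Lemma free_basis_of_support S H : pos_subgroup H -> padic_support S H ->
  exists k (c : 'I_k -> rat), free_basis H c.
Proof.
elim: S H => [|p S IH] H gH hS.
  have [H1 HM HV Hpos] := gH; exists 0%N, (fun=> 1).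
  split=> [[] //|[] //|e _ [] //|x Hx]. exists (fun=> 0); rewrite big_ord0.
  by apply: padic_eq1 (Hpos _ Hx) _ => p pp; exact: hS.
have [k [c hc]] := IH _ (padic_kernel_subgroup p gH) (padic_kernel_support hS).
have [nz|allz] := pselect (exists x, H x /\ padic p x != 0).
  have [h0 [Hh0 vh0] hdiv] := padic_least_generator gH nz.
  by exists k.+1, (cons_family h0 c); exact: (free_basis_extend gH hc Hh0 vh0 hdiv).
exists k, c; suff -> : H = padic_kernel p H by [].
apply/seteqP; split=> [x Hx|x [] //]; split=> //.
by apply/eqP; apply: contraT => ne; exfalso; apply: allz; exists x.
Qed.

Lemma rat_generated_subgroup n (q : 'I_n -> rat) :
  (forall i, 0 < q i) -> pos_subgroup (rat_generated q).
Proof.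
move=> qpos; have q0 i : q i != 0 by rewrite gt_eqF.
split; [exact: rat_generated1 | exact: rat_generatedM | exact: rat_generatedV |].
by move=> x [e ->]; apply: prodr_gt0 => i _; apply: exprz_gt0.
Qed.

(* Only primes up to the product of all numerators and denominators of the
   generators occur in rat_generated q. *)
Lemma rat_generated_support n (q : 'I_n -> rat) : (forall i, 0 < q i) ->
  exists S, padic_support S (rat_generated q).
Proof.
move=> qpos; pose M := (\prod_i (numn (q i) * denn (q i)))%N.
have M0 : (0 < M)%N.
  by apply: prodn_gt0 => i; rewrite muln_gt0 numn_gt0 ?denn_gt0.
have dM i : (numn (q i) * denn (q i) %| M)%N.
  by rewrite /M (bigD1 i) //=; apply: dvdn_mulr.
exists (iota 0 M.+1) => x p [e ->] pp.
rewrite mem_iota /= add0n ltnS -ltnNge => Mp.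
rewrite padic_prod // big1 // => i _.
rewrite (padic_large (qpos i) pp) ?mulr0 //; apply: leq_ltn_trans Mp.
  apply: dvdn_leq M0 _; exact: dvdn_trans (dvdn_mulr _ (dvdnn _)) (dM i).
apply: dvdn_leq M0 _; exact: dvdn_trans (dvdn_mull _ (dvdnn _)) (dM i).
Qed.

Lemma rat_generated_free n (q : 'I_n -> rat) : (forall i, 0 < q i) ->
  exists k (c : 'I_k -> rat),
    [/\ (forall j, 0 < c j), mul_independent c & rat_generated q = rat_generated c].
Proof.
move=> qpos; have gH := rat_generated_subgroup qpos.
have [S hS] := rat_generated_support qpos.
have [k [c [cpos cH cind crep]]] := free_basis_of_support gH hS.
exists k, c; split=> //; apply/seteqP; split; first exact: crep.
by have [H1 HM HV _] := gH; exact: rat_generated_min.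
Qed.

Section CayleyAbelsImage.
Variables (G : topologicalType) (T : topgroup G) (V : Type)
  (E : V -> V -> Prop) (act : V -> G -> V) (alpha : V)
  (n : nat) (B : 'I_n -> set V) (g : 'I_n -> G).
Local Notation "x *g y" := (gmul T x y) (at level 40, left associativity).
Local Notation inv := (ginv T).
Local Notation W := (stabilizer act alpha).
Local Notation DeltaW := (Delta T W).

Hypothesis ra : right_action T act.
Hypothesis E_invariant : forall u v h, E u v <-> E (act u h) (act v h).
Hypothesis act_transitive : forall u v, exists h, act u h = v.
Hypothesis E_connected : connected_graph E.
Hypothesis cosW : compact_open_subgroup T W.
Hypothesis B_orbit : forall i, exists beta, B i = orbit_under act W beta.
Hypothesis B_cover : forall beta, E alpha beta -> exists i, B i beta.
Hypothesis g_in_B : forall i, B i (act alpha (g i)).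

Lemma neighbour_double_coset k : E alpha (act alpha k) ->
  exists i s t, [/\ W s, W t & k = s *g g i *g t].
Proof.
move=> Ek; have [i Bi] := B_cover Ek; have [beta0 Bi0] := B_orbit i.
have := g_in_B i; rewrite Bi0 => -[s2 Ws2 e2].
move: Bi; rewrite Bi0 => -[s1 Ws1 e1].
have sW := stab_sg ra alpha.
have Wt : W (inv s2 *g s1) by apply: (sgM sW) => //; exact: (sgV sW).
have e3 : act alpha k = act alpha (g i *g (inv s2 *g s1)).
  by rewrite !(actM ra) -e2 (actK ra) e1.
exists i, (k *g inv (g i *g (inv s2 *g s1))), (inv s2 *g s1); split=> //.
  exact (act_eq_stab ra e3).
by rewrite -tmulA tmulgKV.
Qed.

Lemma Delta_neighbour k : E alpha (act alpha k) ->
  exists i, DeltaW k = DeltaW (g i).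
Proof.
move=> /neighbour_double_coset [i [s [t [Ws Wt ->]]]]; exists i.
by rewrite !(DeltaM cosW) (Delta_id cosW Ws) (Delta_id cosW Wt) mul1r mulr1.
Qed.

(* Following a path from alpha to alpha h expresses Delta(h) as a product
   of the Delta(g_i). *)
Lemma Delta_generated h : rat_generated (fun i => DeltaW (g i)) (DeltaW h).
Proof.
have q0 i : DeltaW (g i) != 0 by rewrite gt_eqF // Delta_gt0.
suff path_ind v : clos_refl_trans_n1 V E alpha v ->
    forall h, act alpha h = v -> rat_generated (fun i => DeltaW (g i)) (DeltaW h).
  exact: path_ind (clos_rt_rtn1 _ _ _ _ (E_connected alpha (act alpha h))) h erefl.
elim=> [|u w Euw _ IH] {}h ah.
  by rewrite (Delta_id cosW ah); exact: rat_generated1.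
have [h0 ah0] := act_transitive alpha u.
have Ek : E alpha (act alpha (h *g inv h0)).
  by move/(E_invariant _ _ (inv h0)): Euw; rewrite -ah0 -ah (actK ra) (actM ra).
have [i Di] := Delta_neighbour Ek.
rewrite -(tmulgKV T h h0) (DeltaM cosW) Di.
by apply: rat_generatedM => //; [exact: rat_generated_gen | exact: IH].
Qed.

Lemma Delta_range : range DeltaW = rat_generated (fun i => DeltaW (g i)).
Proof.
apply/seteqP; split=> [r [h _ <-]|]; first exact: Delta_generated.
apply: rat_generated_min.
- by exists (gone T) => //; apply: (Delta_id cosW); exact: sg1 (stab_sg ra alpha).
- by move=> _ _ [x _ <-] [y _ <-]; exists (x *g y) => //; rewrite (DeltaM cosW).
- by move=> _ [x _ <-]; exists (inv x) => //; rewrite (DeltaV cosW).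
- by move=> i; exists (g i).
Qed.

End CayleyAbelsImage.

Unset Implicit Arguments.
Set Strict Implicit.
Set Printing Implicit Defensive.

Theorem corollary4p3 (G : topologicalType) (T : topgroup G)
  (V : Type) (E : V -> V -> Prop) (act : V -> G -> V)
  (alpha : V) (n : nat) (B : 'I_n -> set V) (g : 'I_n -> G) :
  tdlc G -> compactly_generated T ->
  cayley_abels T E act ->
  (* B_1, ..., B_n are the orbits of G_alpha on Gamma(alpha), listed
     without repetition *)
  (forall i, exists beta, E alpha beta /\
       B i = orbit_under act (stabilizer act alpha) beta) ->
  injective B ->
  (forall beta, E alpha beta -> exists i, B i beta) ->
  (forall i, B i (act alpha (g i))) ->
  exists a b : 'I_n -> nat,
    (forall i, orbit_under act (stabilizer act alpha) (act alpha (g i))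
                 #= `I_(a i)) /\
    (forall i, orbit_under act (stabilizer act alpha)
                 (act alpha (ginv T (g i))) #= `I_(b i)) /\
    (forall U : set G, compact_open_subgroup T U ->
       [set r | exists h : G, modular_value T U h r]
       = rat_generated (fun i => (a i)%:R / (b i)%:R)) /\
    (exists (k : nat) (c : 'I_k -> rat),
       (forall j, 0 < c j) /\
       (forall e : 'I_k -> int, \prod_(j < k) (c j ^ e j) = 1 ->
          forall j, e j = 0) /\
       rat_generated (fun i => (a i)%:R / (b i)%:R) = rat_generated c).
Proof.
move=> _ _ [_ [conE [_ [ra [Einv [trans stabco]]]]]] Bdef _ Bcov gB.
set W := stabilizer act alpha.
have sW : is_subgroup T W := stab_sg ra alpha.
have cosW : compact_open_subgroup T W by split; [exact: sW | exact: stabco].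
have Borb i : exists beta, B i = orbit_under act W beta.
  by have [beta [_ ->]] := Bdef i; exists beta.
have [a ha] := choice (fun i => index_compact_open sW (sg_conj (g i) sW)
  (compact_open_compact cosW) (compact_open_open (compact_open_conj (g i) cosW))).
have [b hb] := choice (fun i => index_compact_open (sg_conj (g i) sW) sW
  (compact_open_compact (compact_open_conj (g i) cosW)) (compact_open_open cosW)).
have {}hb i : index_is T (conj_set T W (g i)) (W `&` conj_set T W (g i)) (b i).
  by rewrite setIC; exact: hb.
have Dg i : Delta T W (g i) = (a i)%:R / (b i)%:R.
  by apply/esym/(Delta_unique cosW cosW); exists (a i), (b i).
exists a, b; split; first by move=> i; exact (stab_orbit_card ra (ha i)).
split; first by move=> i; exact (stab_orbit_card_inv ra (hb i)).
have -> : (fun i => (a i)%:R / (b i)%:R) = (fun i => Delta T W (g i)).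
  by apply/funext => i; rewrite Dg.
split=> [U cU|].
  by rewrite (modular_values_range cosW cU) (Delta_range ra Einv trans conE cosW Borb Bcov gB).
have [k [c [cpos cind ceq]]] := rat_generated_free (fun i => Delta_gt0 cosW (g i)).
by exists k, c.
Qed.
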